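(* Let $G\in\mathcal{G}(\widehat{C}_6,\widehat{C}_7)$, let $x\in V(G)$, let $A$ be a connected component of $G[N_2(x)]$ not belonging to $A^*$, and let $a\in V(A)$ with $|N(a)\cap D|=2$. Then every independent set $S\subseteq N_2(x)\setminus V(A^* )$ with $D\subseteq N(S)$ contains $a$.
   Context: All graphs are finite, simple and undirected. $\mathcal{G}(\widehat{C}_6,\widehat{C}_7)$ is the family of graphs with no subgraph (not necessarily induced) isomorphic to $C_6$ or $C_7$. For a vertex set $S$, $N_i(S)$ is the set of vertices at distance exactly $i$ from $S$, $N(S)=N_1(S)$, $N(v)=N(\{v\})$, $N_2(v)=N_2(\{v\})$ (all in $G$). $A^*$ is the set of connected components $A$ of $G[N_2(x)]$ for which there exists a vertex $a\in V(A)$ with $N(x)\cap N(a)=N(x)\cap N(V(A))$; $V(A^* )$ is the union of their vertex sets; and $D=N(x)\setminus N(V(A^* ))$. *)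

(* A simple graph is a symmetric irreflexive relation e on a finType T. *)
From mathcomp Require Import all_boot.
Set Implicit Arguments. Unset Strict Implicit. Unset Printing Implicit Defensive.

Section Graph.
Variables (T : finType) (e : rel T).

Definition has_cycle_subgraph (k : nat) : Prop :=
  exists s : seq T, [/\ size s = k, uniq s & path.cycle e s].

Definition Nset (S : {set T}) : {set T} :=
  [set y | (y \notin S) && [exists s in S, e s y]].

Definition Nv (v : T) : {set T} := Nset [set v].

Definition N2 (x : T) : {set T} :=
  [set y | [&& y != x, ~~ e x y & [exists z, e x z && e z y]]].

Definition indrel (x : T) : rel T :=
  [rel u v | [&& e u v, u \in N2 x & v \in N2 x]].

Definition is_comp (x : T) (A : {set T}) : bool :=
  [exists v, (v \in N2 x) && (A == [set u | connect (indrel x) v u])].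

Definition in_Astar (x : T) (A : {set T}) : bool :=
  is_comp x A && [exists a in A, Nv x :&: Nv a == Nv x :&: Nset A].

Definition VAstar (x : T) : {set T} :=
  [set u | [exists A : {set T}, in_Astar x A && (u \in A)]].

Definition Dset (x : T) : {set T} := Nv x :\: Nset (VAstar x).

Definition independent (S : {set T}) : bool :=
  [forall u in S, forall v in S, ~~ e u v].

End Graph.

From mathcomp Require Import all_boot.
Set Implicit Arguments. Unset Strict Implicit. Unset Printing Implicit Defensive.

(* Suppose a is not in S.  Let d1, d2 be the two neighbours of a in D and s1, s2
   vertices of S adjacent to d1, d2.  Since A is not in A*, some a' in A sees a
   vertex d3 of N(x) that a misses; with no C6, A lies in the closed
   neighbourhood of a, so a a' is an edge.  For s in {s1, s2} the absence of C6
   and C7 then forces: s misses a and the other d_j, and if no vertex of N_2(x)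
   joins s to the other d_j, every vertex of the component of s sees only d_i in
   N(x) -- impossible, as that component is not in A* either.  The two joining
   vertices q (for s1) and r (for s2) close the 6-cycle x d1 s1 q s2 d2 when
   q = r, and d1 s1 q d2 s2 r otherwise. *)

Lemma connect_invariant (T : finType) (r : rel T) (P : T -> Prop) :
  (forall u w, P u -> r u w -> P w) -> forall v u, connect r v u -> P v -> P u.
Proof.
move=> HP v u /connectP [p]; elim: p v => [|w p IH] v /=; first by move=> _ ->.
by move=> /andP [rvw pw] hu Pv; exact: IH pw hu (HP _ _ Pv rvw).
Qed.

Lemma no_hexagon (T : finType) (e : rel T) :
  ~ has_cycle_subgraph e 6 -> forall v1 v2 v3 v4 v5 v6,
  e v1 v2 -> e v2 v3 -> e v3 v4 -> e v4 v5 -> e v5 v6 -> e v6 v1 ->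
  uniq [:: v1; v2; v3; v4; v5; v6] -> False.
Proof.
move=> noC6 v1 v2 v3 v4 v5 v6 h1 h2 h3 h4 h5 h6 u; apply: noC6.
by exists [:: v1; v2; v3; v4; v5; v6]; rewrite /= h1 h2 h3 h4 h5 h6.
Qed.

Lemma no_heptagon (T : finType) (e : rel T) :
  ~ has_cycle_subgraph e 7 -> forall v1 v2 v3 v4 v5 v6 v7,
  e v1 v2 -> e v2 v3 -> e v3 v4 -> e v4 v5 -> e v5 v6 -> e v6 v7 -> e v7 v1 ->
  uniq [:: v1; v2; v3; v4; v5; v6; v7] -> False.
Proof.
move=> noC7 v1 v2 v3 v4 v5 v6 v7 h1 h2 h3 h4 h5 h6 h7 u; apply: noC7.
by exists [:: v1; v2; v3; v4; v5; v6; v7]; rewrite /= h1 h2 h3 h4 h5 h6 h7.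
Qed.

Arguments no_hexagon {T e} noC6 v1 v2 v3 v4 v5 v6.
Arguments no_heptagon {T e} noC7 v1 v2 v3 v4 v5 v6 v7.

Section SecondNeighbourhood.

Variables (T : finType) (e : rel T).
Hypothesis e_sym : symmetric e.
Variable x : T.

Lemma N2P u :
  reflect [/\ u != x, ~~ e x u & exists z, e x z && e z u] (u \in N2 e x).
Proof.
rewrite inE; apply: (iffP and3P) => [[? ? /existsP ?]|[? ? ?]]; split => //.
exact/existsP.
Qed.

Lemma NvE v y : (y \in Nv e v) = (y != v) && e v y.
Proof.
rewrite !inE; case: (y == v) => //=; apply/existsP/idP => [[s /andP [/set1P -> //]]|].
by exists v; rewrite in_set1 eqxx.
Qed.

Lemma N2_nadj u : u \in N2 e x -> e x u = false.
Proof. by case/N2P => _ /negbTE. Qed.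

Lemma N2_neq u : u \in N2 e x -> u != x.
Proof. by case/N2P. Qed.

Lemma indrel_connect_sym : connect_sym (indrel e x).
Proof.
apply: sym_connect_sym => u v; rewrite /indrel /= e_sym.
by case: (u \in N2 e x); case: (v \in N2 e x); rewrite ?andbF.
Qed.

Lemma connect_N2 v u : v \in N2 e x -> connect (indrel e x) v u -> u \in N2 e x.
Proof.
move=> hv c; apply: (connect_invariant (P := fun u => u \in N2 e x) _ c hv).
by move=> p w _ /and3P [].
Qed.

Lemma comp_connect (C : {set T}) c :
  is_comp e x C -> c \in C -> C = [set u | connect (indrel e x) c u].
Proof.
case/existsP => v /andP [_ /eqP ->]; rewrite inE => vc.
apply/setP => u; rewrite !inE; apply/idP/idP; last exact: connect_trans.
by apply: connect_trans; rewrite indrel_connect_sym.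
Qed.

Lemma comp_sub_N2 (C : {set T}) : is_comp e x C -> C \subset N2 e x.
Proof.
by case/existsP => v /andP [hv /eqP ->]; apply/subsetP => u; rewrite inE; apply: connect_N2.
Qed.

Lemma comp_of_N2 s : s \in N2 e x -> is_comp e x [set u | connect (indrel e x) s u].
Proof. by move=> hs; apply/existsP; exists s; rewrite hs eqxx. Qed.

Lemma comp_not_Astar s :
  s \notin VAstar e x -> ~~ in_Astar e x [set u | connect (indrel e x) s u].
Proof.
apply: contra => h; rewrite inE; apply/existsP.
by exists [set u | connect (indrel e x) s u]; rewrite h inE connect0.
Qed.

Lemma Nv_sub_Nset (C : {set T}) c :
  C \subset N2 e x -> c \in C -> Nv e x :&: Nv e c \subset Nv e x :&: Nset e C.
Proof.
move=> CN2 cC; apply/subsetP => d.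
rewrite !in_setI !NvE inE => /andP [/andP [dx xd] /andP [_ cd]].
have dC : d \notin C by apply: contraL xd => /(subsetP CN2) /N2_nadj ->.
by rewrite dx xd dC; apply/existsP; exists c; rewrite cC.
Qed.

Lemma not_Astar_witness (C : {set T}) c :
  is_comp e x C -> ~~ in_Astar e x C -> c \in C ->
  exists c' d, [/\ c' \in C, e x d, e c' d & ~~ e c d].
Proof.
move=> hC hn cC; have CN2 := comp_sub_N2 hC.
have neq : Nv e x :&: Nv e c != Nv e x :&: Nset e C.
  by apply: contra hn => h; rewrite /in_Astar hC; apply/existsP; exists c; rewrite cC.
have /properP [_ [d]] : Nv e x :&: Nv e c \proper Nv e x :&: Nset e C.
  by rewrite properEneq neq Nv_sub_Nset.
rewrite !in_setI !NvE inE => /andP [/andP [dx xd] /andP [_ /existsP [c' /andP [c'C c'd]]]].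
have dc : d != c by apply: contraTneq xd => ->; rewrite N2_nadj // (subsetP CN2).
by rewrite dx dc xd /= => ncd; exists c', d.
Qed.

Lemma Dset_adj d : d \in Dset e x -> e x d.
Proof. by rewrite in_setD NvE => /and3P []. Qed.

Lemma Nset_adj (S : {set T}) y : y \in Nset e S -> exists2 s, s \in S & e s y.
Proof. by rewrite inE => /andP [_ /existsP [s /andP [sS sy]]]; exists s. Qed.

Definition sole_x_nbr (u1 u : T) : Prop := forall d, e x d -> e u d -> d = u1.

Lemma sole_x_nbr_adj u1 u : u \in N2 e x -> sole_x_nbr u1 u -> e u u1.
Proof.
by case/N2P => _ _ [z /andP [xz zu]] sole; rewrite -(sole z) // e_sym.
Qed.

End SecondNeighbourhood.

Ltac refute_edge := match goal with
 | |- is_true (~~ ?r ?v ?v) => match goal with I : irreflexive r |- _ => by rewrite I end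
 | |- is_true (~~ ?r ?u ?v) =>
     match goal with S : symmetric r, H : is_true (~~ r v u) |- _ => by rewrite S end
 | |- is_true (~~ ?r _ ?v) => match goal with H : is_true (v \in _) |- _ =>
     by rewrite (N2_nadj H) end
 | |- is_true (~~ ?r ?v _) => match goal with H : is_true (v \in _), S : symmetric r |- _ =>
     by rewrite S (N2_nadj H) end
 | |- is_true (~~ (_ \in _)) => by apply/negP => /N2_neq; rewrite eqxx
 end.

Ltac distinct_by_subst :=
  match goal with H : is_true _ |- _ =>
    apply: (contraTneq _ H) => ->; solve [done | refute_edge] end.

Ltac distinct :=
  solve [ done | distinct_by_subst | rewrite eq_sym; first [done | distinct_by_subst] ].

Ltac edge := match goal with
 | |- is_true (?r _ _) => solve [ done | match goal with S : symmetric r |- _ => by rewrite S end ]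
 end.

(* Closes the goal [False] from the cycle [C], discharging its edges up to
   symmetry and the distinctness of its vertices from the context. *)
Ltac cycle_in C :=
  apply: C; [edge .. | rewrite /= !inE ?negb_or; repeat (apply/andP; split); distinct].

Section NoC6C7.

Variables (T : finType) (e : rel T).
Hypotheses (e_sym : symmetric e) (e_irr : irreflexive e).
Hypotheses (noC6 : ~ has_cycle_subgraph e 6) (noC7 : ~ has_cycle_subgraph e 7).
Variable x : T.

Lemma comp_sub_closed_nbhd (A : {set T}) a d1 d2 :
  is_comp e x A -> a \in A -> d1 != d2 -> e x d1 -> e x d2 -> e a d1 -> e a d2 ->
  {in A, forall u, (u == a) || e a u}.
Proof.
move=> hA aA d12 xd1 xd2 ad1 ad2 u; rewrite (comp_connect e_sym hA aA) inE => c.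
have aN2 := subsetP (comp_sub_N2 hA) _ aA.
apply: (connect_invariant (P := fun u => (u == a) || e a u) _ c); last by rewrite eqxx.
move=> p w hp /and3P [pw pN2 wN2]; apply/norP => -[wa naw].
case/orP: hp => [/eqP pa | ap]; first by rewrite -pa pw in naw.
case/N2P: (wN2) => _ _ [z /andP [xz zw]].
have [zd1 | zd1] := eqVneq z d1; first by subst z; cycle_in (no_hexagon noC6 x d2 a p w d1).
by cycle_in (no_hexagon noC6 x d1 a p w z).
Qed.

Section Witness.

Variables (a a' d3 u1 u2 : T).
Hypotheses (aN2 : a \in N2 e x) (a'N2 : a' \in N2 e x) (aa' : e a a').
Hypotheses (xd3 : e x d3) (a'd3 : e a' d3) (nad3 : ~~ e a d3).
Hypotheses (u12 : u1 != u2) (xu1 : e x u1) (xu2 : e x u2) (au1 : e a u1) (au2 : e a u2).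

Lemma sole_x_nbr_nadj v : v \in N2 e x -> sole_x_nbr e x u1 v -> ~~ e v a.
Proof.
move=> vN2 vsole; apply/negP => va.
have vu1 := sole_x_nbr_adj e_sym vN2 vsole.
have nvd3 : ~~ e v d3 by apply/negP => /(vsole _ xd3) d3u1; move: nad3; rewrite d3u1 au1.
by cycle_in (no_hexagon noC6 x d3 a' a v u1).
Qed.

Definition confined v : Prop :=
  [/\ v \in N2 e x, sole_x_nbr e x u1 v
    & forall w, w \in N2 e x -> e v w -> ~~ e w u2].

Lemma confined_step v w : confined v -> indrel e x v w -> confined w.
Proof.
case=> vN2 vsole vshield /and3P [vw _ wN2].
have vu1 := sole_x_nbr_adj e_sym vN2 vsole.
have nva := sole_x_nbr_nadj vN2 vsole.
have nvu2 : ~~ e v u2 by apply/negP => /(vsole _ xu2) u21; move: u12; rewrite u21 eqxx.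
have nwu2 := vshield w wN2 vw.
split=> // [d xd wd | w' w'N2 ww'].
  apply/eqP/negPn/negP => du1.
  by cycle_in (no_heptagon noC7 u1 v w d x u2 a).
apply/negP => w'u2; have [w'v | w'v] := eqVneq w' v.
  by rewrite w'v (negbTE nvu2) in w'u2.
by cycle_in (no_hexagon noC6 x u1 v w w' u2).
Qed.

Section Vertex.

Variable s : T.
Hypotheses (sN2 : s \in N2 e x) (sa : s != a) (su1 : e s u1).

Lemma witness_nadj_a : ~~ e a s.
Proof.
apply/negP => as_; have [sa' | sa'] := eqVneq s a'.
  by subst s; cycle_in (no_hexagon noC6 x d3 a' u1 a u2).
by cycle_in (no_hexagon noC6 x d3 a' a s u1).
Qed.

Lemma witness_nadj_u2 : ~~ e s u2.
Proof.
apply/negP => su2; have nas := witness_nadj_a.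
by cycle_in (no_heptagon noC7 x d3 a' a u1 s u2).
Qed.

Lemma witness_sole_x_nbr : sole_x_nbr e x u1 s.
Proof.
move=> d xd sd; apply/eqP/negPn/negP => du1; have nsu2 := witness_nadj_u2.
by cycle_in (no_hexagon noC6 x u2 a u1 s d).
Qed.

(* Otherwise [s] would be confined, hence so would be its whole component,
   contradicting [not_Astar_witness] for that component. *)
Lemma witness_link :
  s \notin VAstar e x -> ~~ e s u2 /\ exists2 q, q \in N2 e x & e s q && e q u2.
Proof.
move=> sV; split; first exact: witness_nadj_u2.
have [/existsP [q /and3P [qN2 sq qu2]] | /existsPn noq] :=
  boolP [exists q, [&& q \in N2 e x, e s q & e q u2]]; first by exists q; rewrite ?sq.
have conf_s : confined s.
  by split=> [||w wN2 sw]; [ | exact: witness_sole_x_nbr | move: (noq w); rewrite wN2 sw].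
have sB : s \in [set u | connect (indrel e x) s u] by rewrite inE connect0.
have [b' [d4 [b'B xd4 b'd4 nsd4]]] :=
  not_Astar_witness (comp_of_N2 sN2) (comp_not_Astar sV) sB.
have [_ b'sole _] : confined b'.
  by move: b'B; rewrite inE => c; apply: (connect_invariant confined_step c).
by move: nsd4; rewrite (b'sole _ xd4 b'd4) su1.
Qed.

End Vertex.

End Witness.

End NoC6C7.

Theorem corollary2p12 (T : finType) (e : rel T)
  (e_sym : symmetric e) (e_irr : irreflexive e)
  (noC6 : ~ has_cycle_subgraph e 6) (noC7 : ~ has_cycle_subgraph e 7)
  (x : T) (A : {set T}) (a : T)
  (hA : is_comp e x A) (hAn : ~~ in_Astar e x A) (ha : a \in A)
  (hD : #|Nv e a :&: Dset e x| = 2) :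
  forall S : {set T},
    independent e S -> S \subset N2 e x :\: VAstar e x ->
    Dset e x \subset Nset e S -> a \in S.
Proof.
move=> S indS subS DS; apply/negPn/negP => aS.
have inS s : s \in S -> [/\ s \in N2 e x, s \notin VAstar e x & s != a].
  move=> sS; move/(subsetP subS): (sS); rewrite in_setD => /andP [-> ->].
  by split=> //; apply: contraNneq aS => <-.
have aN2 := subsetP (comp_sub_N2 hA) _ ha.
have [a' [d3 [a'A xd3 a'd3 nad3]]] := not_Astar_witness hA hAn ha.
have a'N2 := subsetP (comp_sub_N2 hA) _ a'A.
move/eqP/cards2P: hD => [d1 [d2 [d12 hD]]]; have d21 : d2 != d1 by rewrite eq_sym.
have /setIP [/[!NvE] /andP [_ ad1] Dd1] : d1 \in Nv e a :&: Dset e x by rewrite hD !inE eqxx.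
have /setIP [/[!NvE] /andP [_ ad2] Dd2] : d2 \in Nv e a :&: Dset e x.
  by rewrite hD !inE eqxx orbT.
have [xd1 xd2] := (Dset_adj Dd1, Dset_adj Dd2).
have aa' : e a a'.
  have /orP [/eqP a'a | //] :=
    comp_sub_closed_nbhd e_sym e_irr noC6 hA ha d12 xd1 xd2 ad1 ad2 a'A.
  by move: nad3; rewrite -a'a a'd3.
have link := witness_link e_sym e_irr noC6 noC7 aN2 a'N2 aa' xd3 a'd3 nad3.
have [s1 s1S s1d1] := Nset_adj (subsetP DS _ Dd1); have [s1N2 s1V s1a] := inS _ s1S.
have [s2 s2S s2d2] := Nset_adj (subsetP DS _ Dd2); have [s2N2 s2V s2a] := inS _ s2S.
have [ns1d2 [q qN2 /andP [s1q qd2]]] := link _ _ d12 xd1 xd2 ad1 ad2 _ s1N2 s1a s1d1 s1V.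
have [ns2d1 [r rN2 /andP [s2r rd1]]] := link _ _ d21 xd2 xd1 ad2 ad1 _ s2N2 s2a s2d2 s2V.
have ns1s2 : ~~ e s1 s2 by move/forall_inP/(_ s1 s1S)/forall_inP/(_ s2 s2S): indS.
have [rq | rq] := eqVneq r q.
  by subst r; cycle_in (no_hexagon noC6 x d1 s1 q s2 d2).
by cycle_in (no_hexagon noC6 d1 s1 q d2 s2 r).
Qed.
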